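(* Let $(A,\Delta,\Delta')$ be a commutative Hopf brace over a field $k$, with antipodes $S$ (for $\Delta$) and $T$ (for $\Delta'$). Define $\rho(a)=a_{(-1)}\otimes a_{(0)}:=S(a_1)a_{21'}\otimes a_{22'}$ and $\varphi(a)=a_{[0]}\otimes a_{[1]}:=T(a_{1'})_{(-1)}a_{2'}\otimes T(a_{1'})_{(0)}a_{3'}$ for $a\in A$. Then the map $$c:A\otimes A\to A\otimes A,\qquad c(x\otimes y)=x_{(-1)}y_{[0]}\otimes x_{(0)}y_{[1]}$$ is a solution of the braid equation $(c\otimes\mathrm{id})(\mathrm{id}\otimes c)(c\otimes\mathrm{id})=(\mathrm{id}\otimes c)(c\otimes\mathrm{id})(\mathrm{id}\otimes c)$ on $A\otimes A\otimes A$.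
   Context: All objects are over a field $k$. A Hopf brace $(A,\Delta,\Delta')$ consists of an algebra $(A,m,1)$ with two Hopf algebra structures $(A,m,1,\Delta,\varepsilon,S)$ and $(A,m,1,\Delta',\epsilon,T)$ on the same algebra such that for all $h\in A$: $h_{1'}\otimes h_{2'1}\otimes h_{2'2}=h_{11'}S(h_2)h_{31'}\otimes h_{12'}\otimes h_{32'}$. It is commutative if $A$ is commutative. Sweedler notation: $\Delta(h)=h_1\otimes h_2$, $\Delta'(h)=h_{1'}\otimes h_{2'}$, iterated $\Delta'$ written $h_{1'}\otimes h_{2'}\otimes h_{3'}$; $h_{21'}$ means $\Delta'$ applied to $h_2$. *)

(* Tensor products are not in the library: an element of
   A (x) A (resp. A (x) A (x) A) is represented by a finite list of pure tensors
   (a finite sum), and two representatives are identified exactly when every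
   bilinear (resp. trilinear) map into every k-vector space takes the same value
   on them (the universal property of the tensor product). *)
From HB Require Import structures.
From mathcomp Require Import all_boot all_order all_algebra.
Set Implicit Arguments. Unset Strict Implicit. Unset Printing Implicit Defensive.
Import GRing.Theory.
Local Open Scope ring_scope.

Section HopfBraceDefs.
Variable k : fieldType.

Definition islin (V W : lmodType k) (f : V -> W) : Prop :=
  forall (a : k) (u v : V), f (a *: u + v) = a *: f u + f v.

Definition lin2 (V U : lmodType k) (f : V -> V -> U) : Prop :=
  (forall y, islin (fun x => f x y)) /\ (forall x, islin (f x)).

Definition lin3 (V U : lmodType k) (f : V -> V -> V -> U) : Prop :=
  [/\ forall y z, islin (fun x => f x y z),
      forall x z, islin (fun y => f x y z) &
      forall x y, islin (f x y)].

Definition teq2 (V : lmodType k) (s t : seq (V * V)) : Prop :=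
  forall (U : lmodType k) (f : V -> V -> U), lin2 f ->
    \sum_(p <- s) f p.1 p.2 = \sum_(p <- t) f p.1 p.2.

Definition teq3 (V : lmodType k) (s t : seq (V * V * V)) : Prop :=
  forall (U : lmodType k) (f : V -> V -> V -> U), lin3 f ->
    \sum_(p <- s) f p.1.1 p.1.2 p.2 = \sum_(p <- t) f p.1.1 p.1.2 p.2.

Definition bind (X Y : Type) (s : seq X) (f : X -> seq Y) : seq Y :=
  flatten (map f s).

Section OnAlgebra.
Variable A : algType k.

(* (A, m, 1, D, e, S) is a Hopf algebra; D h is a representative of Delta(h). *)
Record is_hopf (D : A -> seq (A * A)) (e : A -> k) (S : A -> A) : Prop := {
  hopf_D_lin : forall (a : k) (x y : A),
    teq2 (D (a *: x + y)) ([seq (a *: p.1, p.2) | p <- D x] ++ D y);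
  hopf_e_lin : forall (a : k) (x y : A), e (a *: x + y) = a * e x + e y;
  hopf_S_lin : forall (a : k) (x y : A), S (a *: x + y) = a *: S x + S y;
  hopf_coass : forall h : A,
    teq3 (bind (D h) (fun p => [seq (p.1, q.1, q.2) | q <- D p.2]))
         (bind (D h) (fun p => [seq (q.1, q.2, p.2) | q <- D p.1]));
  hopf_counitl : forall h : A, \sum_(p <- D h) e p.1 *: p.2 = h;
  hopf_counitr : forall h : A, \sum_(p <- D h) e p.2 *: p.1 = h;
  hopf_D_mul : forall x y : A,
    teq2 (D (x * y)) (bind (D x) (fun p => [seq (p.1 * q.1, p.2 * q.2) | q <- D y]));
  hopf_D_one : teq2 (D 1) [:: (1, 1)];
  hopf_e_mul : forall x y : A, e (x * y) = e x * e y;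
  hopf_e_one : e 1 = 1;
  hopf_antipodel : forall h : A, \sum_(p <- D h) S p.1 * p.2 = (e h)%:A;
  hopf_antipoder : forall h : A, \sum_(p <- D h) p.1 * S p.2 = (e h)%:A
}.

Definition iter_cop (D : A -> seq (A * A)) (h : A) : seq (A * A * A) :=
  bind (D h) (fun p => [seq (p.1, q.1, q.2) | q <- D p.2]).

(* Hopf brace (A, D, D'):
   h1' (x) h2'1 (x) h2'2 = h11' S(h2) h31' (x) h12' (x) h32' *)
Definition hopf_brace (D : A -> seq (A * A)) (e : A -> k) (S : A -> A)
    (D' : A -> seq (A * A)) (e' : A -> k) (T : A -> A) : Prop :=
  [/\ is_hopf D e S, is_hopf D' e' T &
      forall h : A,
        teq3 (bind (D' h) (fun p => [seq (p.1, q.1, q.2) | q <- D p.2]))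
             (bind (iter_cop D h) (fun t =>
                bind (D' t.1.1) (fun r =>
                  [seq (r.1 * S t.1.2 * s.1, r.2, s.2) | s <- D' t.2])))].

Variables (D : A -> seq (A * A)) (S : A -> A) (D' : A -> seq (A * A)) (T : A -> A).

Definition hb_rho (a : A) : seq (A * A) :=
  bind (D a) (fun p => [seq (S p.1 * q.1, q.2) | q <- D' p.2]).

Definition hb_phi (a : A) : seq (A * A) :=
  bind (iter_cop D' a) (fun t =>
    [seq (r.1 * t.1.2, r.2 * t.2) | r <- hb_rho (T t.1.1)]).

Definition hb_c (x y : A) : seq (A * A) :=
  bind (hb_rho x) (fun r => [seq (r.1 * s.1, r.2 * s.2) | s <- hb_phi y]).

Definition c12 (t : seq (A * A * A)) : seq (A * A * A) :=
  bind t (fun u => [seq (v.1, v.2, u.2) | v <- hb_c u.1.1 u.1.2]).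
Definition c23 (t : seq (A * A * A)) : seq (A * A * A) :=
  bind t (fun u => [seq (u.1.1, v.1, v.2) | v <- hb_c u.1.2 u.2]).

End OnAlgebra.
End HopfBraceDefs.

From HB Require Import structures.
From mathcomp Require Import all_boot all_order all_algebra.
From mathcomp Require Import ring.
From Stdlib Require Import FunctionalExtensionality Setoid Morphisms.
Set Implicit Arguments. Unset Strict Implicit. Unset Printing Implicit Defensive.
Import GRing.Theory.
Local Open Scope ring_scope.

(* The braiding c is multiplicative, c(x x' (x) y y') = c(x (x) y) c(x' (x) y'),
   because A is commutative and rho, phi are algebra maps.  Hence both sides of
   the braid equation are multiplicative linear endomorphisms of A (x) A (x) A,
   and such an endomorphism is determined by its values on x (x) 1 (x) 1, on
   Delta'(g) (x) 1 and on (id (x) Delta') Delta'(h), because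
     x (x) y (x) z = (x (x) 1 (x) 1) (1 (x) y (x) 1) (1 (x) 1 (x) z),
     1 (x) y (x) 1 = (T(y_1') (x) 1 (x) 1) (y_2' (x) y_3' (x) 1),
     1 (x) 1 (x) z = (T(z_1')_1' (x) T(z_1')_2' (x) 1) (z_2' (x) z_3' (x) z_4').
   On these elements the two sides agree by c(x (x) 1) = rho(x),
   c o Delta' = Delta', the coassociativity (id (x) rho) rho = (Delta' (x) id) rho
   of the coaction rho, and the brace compatibility of Delta and Delta'. *)

Section Linear.
Variable k : fieldType.
Implicit Types V W : lmodType k.

Lemma islin0 V W (f : V -> W) : islin f -> f 0 = 0.
Proof.
move=> h; have := h 1 0 0; rewrite !scale1r addr0 => /(congr1 (fun z => z - f 0)).
by rewrite subrr addrK => /esym.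
Qed.

Lemma islinZ V W (f : V -> W) a u : islin f -> f (a *: u) = a *: f u.
Proof. by move=> h; have := h a u 0; rewrite addr0 (islin0 h) addr0. Qed.

Lemma islinD V W (f : V -> W) u v : islin f -> f (u + v) = f u + f v.
Proof. by move=> h; have := h 1 u v; rewrite !scale1r. Qed.

Lemma islin_sum V W (f : V -> W) I (r : seq I) (P : pred I) F : islin f ->
  f (\sum_(i <- r | P i) F i) = \sum_(i <- r | P i) f (F i).
Proof. by move=> h; apply: (big_morph f (fun u v => islinD u v h) (islin0 h)). Qed.

Lemma islin_id V : islin (fun x : V => x). Proof. by []. Qed.

Lemma islin_big V W I (r : seq I) (F : V -> I -> W) :
  (forall i, islin (fun x => F x i)) -> islin (fun x => \sum_(i <- r) F x i).
Proof.
by move=> h a u v; rewrite scaler_sumr -big_split; apply: eq_bigr => i _; apply: h.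
Qed.

Lemma islin_scale V W (c : k) (F : V -> W) : islin F -> islin (fun x => c *: F x).
Proof. by move=> h a u v; rewrite h scalerDr !scalerA mulrC. Qed.

Lemma islin_scalel V W (phi : V -> k) (w : W) :
  (forall a x y, phi (a *: x + y) = a * phi x + phi y) -> islin (fun x => phi x *: w).
Proof. by move=> h a u v; rewrite h scalerDl scalerA. Qed.

Lemma islin_comp V V' W (g : V' -> W) (P : V -> V') :
  islin g -> islin P -> islin (fun x => g (P x)).
Proof. by move=> hg hP a u v; rewrite hP hg. Qed.

Lemma lin2_comp1 V V' W (g : V' -> V' -> W) (P : V -> V') b :
  lin2 g -> islin P -> islin (fun x => g (P x) b).
Proof. by case=> h1 _; apply: (islin_comp (g := g^~ b)). Qed.

Lemma lin2_comp2 V V' W (g : V' -> V' -> W) (P : V -> V') a :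
  lin2 g -> islin P -> islin (fun x => g a (P x)).
Proof. by case=> _ h2; apply: islin_comp. Qed.

Lemma lin3_comp1 V V' W (g : V' -> V' -> V' -> W) (P : V -> V') b c :
  lin3 g -> islin P -> islin (fun x => g (P x) b c).
Proof. by case=> h1 _ _; apply: (islin_comp (g := fun y => g y b c)). Qed.

Lemma lin3_comp2 V V' W (g : V' -> V' -> V' -> W) (P : V -> V') a c :
  lin3 g -> islin P -> islin (fun x => g a (P x) c).
Proof. by case=> _ h2 _; apply: (islin_comp (g := fun y => g a y c)). Qed.

Lemma lin3_comp3 V V' W (g : V' -> V' -> V' -> W) (P : V -> V') a b :
  lin3 g -> islin P -> islin (fun x => g a b (P x)).
Proof. by case=> _ _ h3; apply: islin_comp. Qed.

Variable A : algType k.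

Lemma islin_mull V (c : A) (P : V -> A) : islin P -> islin (fun x => c * P x).
Proof. by move=> h a u v; rewrite h mulrDr scalerAr. Qed.

Lemma islin_mulr V (c : A) (P : V -> A) : islin P -> islin (fun x => P x * c).
Proof. by move=> h a u v; rewrite h mulrDl scalerAl. Qed.

End Linear.

Lemma big_bind (U : nmodType) (X Y : Type) (s : seq X) (F : X -> seq Y) (G : Y -> U) :
  \sum_(y <- bind s F) G y = \sum_(x <- s) \sum_(y <- F x) G y.
Proof. by rewrite /bind big_flatten /= big_map. Qed.

Lemma big_pair (R : Type) (idx : R) (op : Monoid.com_law idx) (X Y : Type)
    (s : seq (X * Y)) (G : X * Y -> R) :
  \big[op/idx]_(p <- s) G (p.1, p.2) = \big[op/idx]_(p <- s) G p.
Proof. by apply: eq_bigr => -[]. Qed.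

(* Lets [setoid_rewrite] rewrite inside the bodies of big operators. *)
#[export] Instance pointwise_eq_proper {X Y Z : Type} (F : (X -> Y) -> Z) :
  Proper (pointwise_relation X eq ==> eq) F.
Proof. by move=> g h E; congr F; apply: functional_extensionality. Qed.

Section HopfSums.
Variables (k : fieldType) (A : comAlgType k).
Variables (D : A -> seq (A * A)) (e : A -> k) (S : A -> A).
Hypothesis hH : is_hopf D e S.
Variable U : lmodType k.

Lemma hopf_S_islin : islin S.
Proof. exact: hopf_S_lin hH. Qed.

Lemma sum_copD (G : A * A -> U) a x y : lin2 (fun a b => G (a, b)) ->
  \sum_(p <- D (a *: x + y)) G p = a *: \sum_(p <- D x) G p + \sum_(p <- D y) G p.
Proof.
move=> hG; have := hopf_D_lin hH a x y hG; rewrite /= !big_pair => ->.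
rewrite big_cat big_map /= scaler_sumr; congr (_ + _).
by apply: eq_bigr => -[u v] _ /=; case: hG => h1 _; apply: islinZ (h1 v).
Qed.

Lemma islin_sum_cop (V : lmodType k) (G : A * A -> U) (P : V -> A) :
  lin2 (fun a b => G (a, b)) -> islin P -> islin (fun x => \sum_(q <- D (P x)) G q).
Proof. by move=> hG hP a u v; rewrite hP sum_copD. Qed.

(* A hypothesis [G p q = G (p.1, 0) q] says that the summand depends on [p]
   only through [p.1]; writing it [G p q] keeps the left-hand side a
   higher-order pattern for [setoid_rewrite]. *)
Lemma sum_coassl (G : A * A -> A * A -> U) h :
  (forall p q, G p q = G (p.1, 0) q) -> lin3 (fun a b c => G (a, 0) (b, c)) ->
  \sum_(p <- D h) \sum_(q <- D p.2) G p q =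
  \sum_(p <- D h) \sum_(q <- D p.1) G (q.1, 0) (q.2, p.2).
Proof.
move=> hi hG; have := hopf_coass hH h hG; rewrite !big_bind /=.
setoid_rewrite big_map => /= E.
rewrite -[RHS]E; apply: eq_bigr => -[a b] _; apply: eq_bigr => -[c d] _ /=.
by rewrite hi.
Qed.

Lemma sum_coassr (G : A * A -> A * A -> U) h :
  (forall p q, G p q = G (0, p.2) q) -> lin3 (fun a b c => G (0, c) (a, b)) ->
  \sum_(p <- D h) \sum_(q <- D p.1) G p q =
  \sum_(p <- D h) \sum_(q <- D p.2) G (0, q.2) (p.1, q.1).
Proof.
move=> hi hG; have := hopf_coass hH h hG; rewrite !big_bind /=.
setoid_rewrite big_map => /= ->.
by apply: eq_bigr => -[a b] _; apply: eq_bigr => -[c d] _ /=; rewrite hi.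
Qed.

Lemma sum_copM (G : A * A -> U) x y : lin2 (fun a b => G (a, b)) ->
  \sum_(p <- D (x * y)) G p = \sum_(p <- D x) \sum_(q <- D y) G (p.1 * q.1, p.2 * q.2).
Proof.
move=> hG; have := hopf_D_mul hH x y hG; rewrite /= big_pair => ->.
by rewrite big_bind; setoid_rewrite big_map.
Qed.

Lemma sum_cop1 (G : A * A -> U) :
  lin2 (fun a b => G (a, b)) -> \sum_(p <- D 1) G p = G (1, 1).
Proof.
by move=> hG; have := hopf_D_one hH hG; rewrite /= big_pair => ->; rewrite big_seq1.
Qed.

Lemma sum_counitl (G : A * A -> U) h :
  (forall p, G p = G (0, p.2)) -> islin (fun b => G (0, b)) ->
  \sum_(p <- D h) e p.1 *: G p = G (0, h).
Proof.
move=> hi hG; rewrite -{2}(hopf_counitl hH h) (islin_sum _ _ _ hG).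
by apply: eq_bigr => p _; rewrite hi (islinZ _ _ hG).
Qed.

Lemma sum_counitr (G : A * A -> U) h :
  (forall p, G p = G (p.1, 0)) -> islin (fun b => G (b, 0)) ->
  \sum_(p <- D h) e p.2 *: G p = G (h, 0).
Proof.
move=> hi hG; rewrite -{2}(hopf_counitr hH h) (islin_sum _ _ _ hG).
by apply: eq_bigr => p _; rewrite hi (islinZ _ _ hG).
Qed.

Lemma sum_antipodel (F : A -> U) h :
  islin F -> \sum_(p <- D h) F (S p.1 * p.2) = e h *: F 1.
Proof.
by move=> hF; rewrite -(islin_sum _ _ _ hF) (hopf_antipodel hH h) (islinZ _ _ hF).
Qed.

Lemma sum_antipoder (F : A -> U) h :
  islin F -> \sum_(p <- D h) F (p.1 * S p.2) = e h *: F 1.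
Proof.
by move=> hF; rewrite -(islin_sum _ _ _ hF) (hopf_antipoder hH h) (islinZ _ _ hF).
Qed.

End HopfSums.

Ltac eta_islin :=
  match goal with
  | |- islin ?f => lazymatch f with
                   | (fun _ => _) => fail
                   | _ => change (islin (fun x => f x)); cbv beta
                   end
  end.
Ltac lin_step :=
  match goal with
  | |- islin _ => eta_islin
  | |- lin2 _ => split => ? /=
  | |- lin3 _ => split => ? ? /=
  | |- islin (fun x => x) => exact: islin_id
  | |- _ => apply: islin_big => ? /=
  | H : is_hopf _ _ _ |- _ => apply: (islin_sum_cop H)
  | H : is_hopf _ _ ?S |- islin (fun x => ?S _) => apply: (islin_comp (hopf_S_islin H))
  | |- _ => apply: islin_mull
  | |- _ => apply: islin_mulr
  | H : lin3 _ |- _ => apply: (lin3_comp1 _ _ H)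
  | H : lin3 _ |- _ => apply: (lin3_comp2 _ _ H)
  | H : lin3 _ |- _ => apply: (lin3_comp3 _ _ H)
  | H : lin2 _ |- _ => apply: (lin2_comp1 _ H)
  | H : lin2 _ |- _ => apply: (lin2_comp2 _ H)
  | H : islin _ |- _ => apply: (islin_comp H)
  | H : is_hopf _ ?e _ |- islin (fun x => ?e _ *: _) =>
      apply: islin_scalel; apply: (hopf_e_lin H)
  | |- _ => apply: islin_scale
  end.
Ltac lin := repeat lin_step.
Ltac side := solve [done | lin].

Section HopfAntipode.
Variables (k : fieldType) (A : comAlgType k).
Variables (D : A -> seq (A * A)) (e : A -> k) (S : A -> A).
Hypothesis hH : is_hopf D e S.

Lemma antipode1 : S 1 = 1.
Proof.
have := sum_antipodel hH 1 (islin_id (V := A)).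
rewrite (sum_cop1 hH (G := fun p => S p.1 * p.2)) /=; last by lin.
by rewrite (hopf_e_one hH) scale1r mulr1.
Qed.

(* Both sides equal S(x1 y1) x2 y2 S(x3) S(y3), contracting either the first
   two or the last two legs with an antipode identity. *)
Lemma antipodeM x y : S (x * y) = S x * S y.
Proof.
pose M := \sum_(p <- D x) \sum_(a <- D p.2) \sum_(q <- D y) \sum_(b <- D q.2)
   S (p.1 * q.1) * (a.1 * b.1) * (S a.2 * S b.2).
have regroup (u v w z t : A) : u * (v * w) * (z * t) = u * (v * z) * (w * t).
  by ring.
transitivity M.
- rewrite -(sum_counitr hH (G := fun p => S p.1) (x * y)) //; last by lin.
  rewrite (sum_copM hH (G := fun p => e p.2 *: S p.1)) /=; last by lin.
  symmetry; rewrite /M; setoid_rewrite regroup.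
  under [LHS]eq_bigr => p _ do under eq_bigr => a _ do under eq_bigr => q _ do
    [rewrite (sum_antipoder hH (F := fun w => S (p.1 * q.1) * (a.1 * S a.2) * w));
       last by lin].
  under [LHS]eq_bigr => p _ do
    [rewrite (sum_antipoder hH
       (F := fun w => \sum_(q <- D y) e q.2 *: (S (p.1 * q.1) * w * 1))); last by lin].
  apply: eq_bigr => p _; rewrite scaler_sumr; apply: eq_bigr => q _.
  by rewrite (hopf_e_mul hH) !mulr1 scalerA.
- rewrite /M; setoid_rewrite (sum_coassl hH); try side.
  setoid_rewrite (sum_coassl hH); try side; rewrite /=.
  under eq_bigr => p _ do rewrite exchange_big.
  under eq_bigr => p _ do under eq_bigr => q _ do
    [rewrite -(sum_copM hH (G := fun r => S r.1 * r.2 * (S p.2 * S q.2))); last by lin].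
  under eq_bigr => p _ do under eq_bigr => q _ do
    [rewrite (sum_antipodel hH (F := fun w => w * (S p.2 * S q.2))); last by lin].
  rewrite -(sum_counitl hH (G := fun p => S p.2) x) //; last by lin.
  rewrite -(sum_counitl hH (G := fun p => S p.2) y) //; last by lin.
  rewrite mulr_suml; apply: eq_bigr => p _; rewrite mulr_sumr; apply: eq_bigr => q _.
  by rewrite (hopf_e_mul hH) mul1r -scalerAl -scalerAr scalerA.
Qed.

End HopfAntipode.

Section BraidingLinear.
Variables (k : fieldType) (A : comAlgType k).
Variables (D : A -> seq (A * A)) (e : A -> k) (S : A -> A).
Variables (D' : A -> seq (A * A)) (e' : A -> k) (T : A -> A).
Hypothesis hH : is_hopf D e S.
Hypothesis hH' : is_hopf D' e' T.

Local Notation rho := (hb_rho D S D').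
Local Notation phi := (hb_phi D S D' T).
Local Notation c := (hb_c D S D' T).

Variable U : lmodType k.

Lemma big_rho (G : A * A -> U) a :
  \sum_(w <- rho a) G w = \sum_(p <- D a) \sum_(q <- D' p.2) G (S p.1 * q.1, q.2).
Proof. by rewrite big_bind; apply: eq_bigr => p _; rewrite big_map. Qed.

Lemma big_phi (G : A * A -> U) a :
  \sum_(w <- phi a) G w =
  \sum_(p <- D' a) \sum_(q <- D' p.2) \sum_(r <- rho (T p.1)) G (r.1 * q.1, r.2 * q.2).
Proof.
rewrite /hb_phi /iter_cop !big_bind; apply: eq_bigr => p _.
by rewrite big_map; apply: eq_bigr => q _; rewrite big_map.
Qed.

Lemma big_c (G : A * A -> U) x y :
  \sum_(w <- c x y) G w = \sum_(r <- rho x) \sum_(s <- phi y) G (r.1 * s.1, r.2 * s.2).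
Proof. by rewrite big_bind; apply: eq_bigr => p _; rewrite big_map. Qed.

Lemma islin_sum_rho (V : lmodType k) (G : A * A -> U) (P : V -> A) :
  lin2 (fun a b => G (a, b)) -> islin P -> islin (fun x => \sum_(w <- rho (P x)) G w).
Proof.
move=> hG; apply: (islin_comp (g := fun x => \sum_(w <- rho x) G w)).
have h : islin (fun x => \sum_(p <- D x) \sum_(q <- D' p.2) G (S p.1 * q.1, q.2)) by lin.
by move=> a u v; rewrite !big_rho; apply: h.
Qed.

Lemma islin_sum_phi (V : lmodType k) (G : A * A -> U) (P : V -> A) :
  lin2 (fun a b => G (a, b)) -> islin P -> islin (fun x => \sum_(w <- phi (P x)) G w).
Proof.
move=> hG; apply: (islin_comp (g := fun x => \sum_(w <- phi x) G w)).
have h : islin (fun x => \sum_(p <- D' x) \sum_(q <- D' p.2) \sum_(r <- rho (T p.1))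
    G (r.1 * q.1, r.2 * q.2)).
  by repeat (first [lin_step | apply: islin_sum_rho]).
by move=> a u v; rewrite !big_phi; apply: h.
Qed.

Lemma islin_sum_c1 (V : lmodType k) (G : A * A -> U) (P : V -> A) y :
  lin2 (fun a b => G (a, b)) -> islin P -> islin (fun x => \sum_(w <- c (P x) y) G w).
Proof.
move=> hG; apply: (islin_comp (g := fun x => \sum_(w <- c x y) G w)).
have h : islin (fun x => \sum_(r <- rho x) \sum_(s <- phi y) G (r.1 * s.1, r.2 * s.2)).
  by repeat (first [lin_step | apply: islin_sum_rho | apply: islin_sum_phi]).
by move=> a u v; rewrite !big_c; apply: h.
Qed.

Lemma islin_sum_c2 (V : lmodType k) (G : A * A -> U) (P : V -> A) x :
  lin2 (fun a b => G (a, b)) -> islin P -> islin (fun y => \sum_(w <- c x (P y)) G w).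
Proof.
move=> hG; apply: (islin_comp (g := fun y => \sum_(w <- c x y) G w)).
have h : islin (fun y => \sum_(r <- rho x) \sum_(s <- phi y) G (r.1 * s.1, r.2 * s.2)).
  by repeat (first [lin_step | apply: islin_sum_rho | apply: islin_sum_phi]).
by move=> a u v; rewrite !big_c; apply: h.
Qed.

End BraidingLinear.

Ltac lin_brace_step :=
  match goal with
  | H1 : is_hopf _ _ _, H2 : is_hopf _ _ _ |- _ => apply: (islin_sum_rho H1 H2)
  | H1 : is_hopf _ _ _, H2 : is_hopf _ _ _ |- _ => apply: (islin_sum_phi H1 H2)
  | H1 : is_hopf _ _ _, H2 : is_hopf _ _ _ |- _ => apply: (islin_sum_c1 H1 H2)
  | H1 : is_hopf _ _ _, H2 : is_hopf _ _ _ |- _ => apply: (islin_sum_c2 H1 H2)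
  end.
Ltac linb := repeat (first [lin_step | lin_brace_step]).
Ltac sideb := solve [done | linb].

Section BraidingMultiplicative.
Variables (k : fieldType) (A : comAlgType k).
Variables (D : A -> seq (A * A)) (e : A -> k) (S : A -> A).
Variables (D' : A -> seq (A * A)) (e' : A -> k) (T : A -> A).
Hypothesis hH : is_hopf D e S.
Hypothesis hH' : is_hopf D' e' T.

Local Notation rho := (hb_rho D S D').
Local Notation phi := (hb_phi D S D' T).
Local Notation c := (hb_c D S D' T).

Variable U : lmodType k.
Implicit Type G : A * A -> U.

Lemma sum_rho1 G : lin2 (fun a b => G (a, b)) -> \sum_(w <- rho 1) G w = G (1, 1).
Proof.
move=> hG.
rewrite big_rho (sum_cop1 hH (G := fun p => \sum_(q <- D' p.2) G (S p.1 * q.1, q.2))) /=;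
  last by linb.
rewrite (antipode1 hH); under eq_bigr do rewrite mul1r.
by rewrite (sum_cop1 hH' (G := fun q => G (q.1, q.2))).
Qed.

Lemma sum_rhoM G x y : lin2 (fun a b => G (a, b)) ->
  \sum_(w <- rho (x * y)) G w = \sum_(u <- rho x) \sum_(v <- rho y) G (u.1 * v.1, u.2 * v.2).
Proof.
move=> hG; rewrite big_rho (sum_copM hH); last by linb.
setoid_rewrite (sum_copM hH'); try sideb.
rewrite big_rho; setoid_rewrite big_rho => /=.
under [RHS]eq_bigr => p _ do rewrite exchange_big.
do 4 (apply: eq_bigr => ? _).
by rewrite (antipodeM hH); congr (G (_, _)); ring.
Qed.

Lemma sum_phi1 G : lin2 (fun a b => G (a, b)) -> \sum_(w <- phi 1) G w = G (1, 1).
Proof.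
move=> hG; rewrite big_phi (sum_cop1 hH'); last by linb.
rewrite /= (sum_cop1 hH'); last by linb.
by rewrite /= (antipode1 hH') (sum_rho1 (G := fun r => G (r.1 * 1, r.2 * 1))) /= ?mulr1 //; linb.
Qed.

Lemma sum_phiM G x y : lin2 (fun a b => G (a, b)) ->
  \sum_(w <- phi (x * y)) G w = \sum_(u <- phi x) \sum_(v <- phi y) G (u.1 * v.1, u.2 * v.2).
Proof.
move=> hG; rewrite big_phi (sum_copM hH'); last by linb.
setoid_rewrite (sum_copM hH'); try sideb.
setoid_rewrite (antipodeM hH').
setoid_rewrite sum_rhoM; try sideb.
rewrite big_phi; setoid_rewrite big_phi => /=.
under [RHS]eq_bigr => a _ do under eq_bigr => q _ do rewrite exchange_big.
under [RHS]eq_bigr => a _ do rewrite exchange_big.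
under [RHS]eq_bigr => a _ do under eq_bigr => b _ do under eq_bigr => q _ do
  rewrite exchange_big.
do 6 (apply: eq_bigr => ? _).
by congr (G (_, _)); ring.
Qed.

Lemma sum_cM G x x' y y' : lin2 (fun a b => G (a, b)) ->
  \sum_(w <- c (x * x') (y * y')) G w =
  \sum_(v <- c x y) \sum_(v' <- c x' y') G (v.1 * v'.1, v.2 * v'.2).
Proof.
move=> hG; rewrite big_c sum_rhoM; last by linb.
setoid_rewrite sum_phiM; try sideb.
rewrite big_c; setoid_rewrite big_c => /=.
under [RHS]eq_bigr => a _ do rewrite exchange_big.
do 4 (apply: eq_bigr => ? _).
by congr (G (_, _)); ring.
Qed.

Lemma sum_cx1 G x : lin2 (fun a b => G (a, b)) ->
  \sum_(w <- c x 1) G w = \sum_(w <- rho x) G w.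
Proof.
move=> hG; rewrite big_c; setoid_rewrite sum_phi1; try sideb.
by apply: eq_bigr => -[a b] _ /=; rewrite !mulr1.
Qed.

End BraidingMultiplicative.

Definition brace_compatible (k : fieldType) (A : algType k)
    (D : A -> seq (A * A)) (S : A -> A) (D' : A -> seq (A * A)) : Prop :=
  forall h : A,
    teq3 (bind (D' h) (fun p => [seq (p.1, q.1, q.2) | q <- D p.2]))
         (bind (iter_cop D h) (fun t =>
            bind (D' t.1.1) (fun r =>
              [seq (r.1 * S t.1.2 * s.1, r.2, s.2) | s <- D' t.2]))).

Section BraceCoaction.
Variables (k : fieldType) (A : comAlgType k).
Variables (D : A -> seq (A * A)) (e : A -> k) (S : A -> A).
Variables (D' : A -> seq (A * A)) (e' : A -> k) (T : A -> A).
Hypothesis hH : is_hopf D e S.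
Hypothesis hH' : is_hopf D' e' T.

Local Notation rho := (hb_rho D S D').
Local Notation c := (hb_c D S D' T).

Variable U : lmodType k.

Lemma sum_cop_rho (G : A * A -> U) b : lin2 (fun a b => G (a, b)) ->
  \sum_(r <- D b) \sum_(v <- rho r.2) G (r.1 * v.1, v.2) = \sum_(s <- D' b) G s.
Proof.
move=> hG; setoid_rewrite big_rho => /=.
rewrite (sum_coassl hH); try sideb; rewrite /=.
under eq_bigr => r _ do rewrite exchange_big.
setoid_rewrite mulrA.
under eq_bigr => r _ do under eq_bigr => n _ do
  [rewrite (sum_antipoder hH (F := fun w => G (w * n.1, n.2))); last by linb].
under eq_bigr => r _ do rewrite -scaler_sumr.
rewrite (sum_counitl hH (G := fun r => \sum_(i <- D' r.2) G (1 * i.1, i.2))) //;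
  last by linb.
by rewrite /= -[RHS]big_pair; under eq_bigr do rewrite mul1r.
Qed.

Hypothesis hB : brace_compatible D S D'.

Lemma sum_brace (G : A * A -> A * A -> U) h :
  (forall p q, G p q = G (p.1, 0) q) -> lin3 (fun a b c => G (a, 0) (b, c)) ->
  \sum_(p <- D' h) \sum_(q <- D p.2) G p q =
  \sum_(p <- D h) \sum_(q <- D p.2) \sum_(r <- D' p.1) \sum_(s <- D' q.2)
     G (r.1 * S q.1 * s.1, 0) (r.2, s.2).
Proof.
move=> hi hG; have E := hB h hG; rewrite /iter_cop !big_bind /= in E.
setoid_rewrite big_map in E; simpl in E.
setoid_rewrite (@big_bind U) in E; setoid_rewrite big_map in E; simpl in E.
rewrite -E; apply: eq_bigr => p _; apply: eq_bigr => -[a b] _.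
by rewrite hi.
Qed.

Lemma sum_rho_cop (G : A * A -> A * A -> U) a :
  (forall p q, G p q = G (p.1, 0) q) -> lin3 (fun a b c => G (a, 0) (b, c)) ->
  \sum_(w <- rho a) \sum_(q <- D w.2) G w q =
  \sum_(p <- D a) \sum_(u <- rho p.1) \sum_(v <- rho p.2) G (u.1 * v.1, 0) (u.2, v.2).
Proof.
move=> hi hG; rewrite big_rho.
transitivity (\sum_(p <- D a) \sum_(n <- D' p.2) \sum_(q <- D n.2)
   (fun n q => G (S p.1 * n.1, 0) q) n q).
  by do 3 (apply: eq_bigr => ? _); rewrite hi.
setoid_rewrite sum_brace; try sideb; rewrite /=.
rewrite (sum_coassl hH); try sideb; rewrite /=.
under eq_bigr => p _ do under eq_bigr => b _ do rewrite exchange_big.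
setoid_rewrite big_rho; setoid_rewrite big_rho => /=.
do 5 (apply: eq_bigr => ? _).
by congr (G (_, _) _); ring.
Qed.

(* Both sides are brought to the expansion [X]: the right-hand side by
   [sum_cop_rho], the left-hand side by the brace compatibility. *)
Lemma sum_rho_coassoc3 (F : A -> A -> A -> U) a : lin3 F ->
  \sum_(w <- rho a) \sum_(v <- rho w.2) F w.1 v.1 v.2 =
  \sum_(w <- rho a) \sum_(q <- D' w.1) F q.1 q.2 w.2.
Proof.
move=> hF.
pose X := \sum_(p <- D a) \sum_(u <- D' (S p.1)) \sum_(q <- D' p.2) \sum_(r <- D q.2)
   \sum_(v <- rho r.2) F (u.1 * q.1) (u.2 * (r.1 * v.1)) v.2.
transitivity X; rewrite /X.
- setoid_rewrite sum_brace; try sideb; rewrite /=.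
  under [RHS]eq_bigr => p _ do rewrite exchange_big.
  under [RHS]eq_bigr => p _ do under eq_bigr => b _ do rewrite exchange_big.
  repeat setoid_rewrite mulrA.
  under [RHS]eq_bigr => p _ do under eq_bigr => b _ do under eq_bigr => c _ do
    [rewrite -(sum_copM hH' (G := fun w => \sum_(n <- D' c.2) \sum_(v <- rho n.2)
         F (w.1 * S c.1 * n.1) (w.2 * v.1) v.2)); last by linb].
  rewrite [RHS](sum_coassl hH); try sideb; rewrite /=.
  under [RHS]eq_bigr => p _ do rewrite exchange_big.
  under [RHS]eq_bigr => p _ do under eq_bigr => c _ do
    [rewrite (sum_antipodel hH (F := fun z => \sum_(w <- D' z) \sum_(n <- D' c.2)
         \sum_(v <- rho n.2) F (w.1 * S c.1 * n.1) (w.2 * v.1) v.2)); last by linb].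
  setoid_rewrite (sum_cop1 hH'); try sideb; rewrite /=.
  under [RHS]eq_bigr => p _ do rewrite -scaler_sumr.
  rewrite (sum_counitl hH (G := fun p => \sum_(c <- D p.2) \sum_(n <- D' c.2)
      \sum_(v <- rho n.2) F (1 * S c.1 * n.1) (1 * v.1) v.2)) //; last by linb.
  rewrite big_rho /=; do 3 (apply: eq_bigr => ? _).
  by rewrite !mul1r.
- under eq_bigr => p _ do under eq_bigr => u _ do under eq_bigr => q _ do
    [rewrite (sum_cop_rho (G := fun z => F (u.1 * q.1) (u.2 * z.1) z.2)); last by linb].
  rewrite big_rho; setoid_rewrite (sum_copM hH'); try sideb; rewrite /=.
  under [RHS]eq_bigr => p _ do rewrite exchange_big.
  by setoid_rewrite (sum_coassr hH'); try sideb.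
Qed.

Lemma sum_rho_coassoc (G : A * A -> A * A -> U) a :
  (forall p q, G p q = G (p.1, 0) q) -> lin3 (fun a b c => G (a, 0) (b, c)) ->
  \sum_(w <- rho a) \sum_(v <- rho w.2) G w v =
  \sum_(w <- rho a) \sum_(q <- D' w.1) G (q.1, 0) (q.2, w.2).
Proof.
move=> hi hG; rewrite -(sum_rho_coassoc3 a hG) /=.
by apply: eq_bigr => w _; apply: eq_bigr => -[x y] _; rewrite hi.
Qed.

(* Contract T(g_1') g_2' inside the first factor, using that rho is multiplicative. *)
Lemma sum_c_cop' (G : A * A -> U) g : lin2 (fun a b => G (a, b)) ->
  \sum_(q <- D' g) \sum_(w <- c q.1 q.2) G w = \sum_(q <- D' g) G q.
Proof.
move=> hG; setoid_rewrite big_c; setoid_rewrite big_phi => /=.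
under eq_bigr => q _ do rewrite exchange_big.
under eq_bigr => q _ do under eq_bigr => a _ do rewrite exchange_big.
repeat setoid_rewrite mulrA.
under eq_bigr => q _ do under eq_bigr => a _ do under eq_bigr => b _ do
  [rewrite -(sum_rhoM hH hH' (G := fun w => G (w.1 * b.1, w.2 * b.2))); last by linb].
rewrite (sum_coassl hH'); try sideb; rewrite /=.
under eq_bigr => q _ do rewrite exchange_big.
under eq_bigr => q _ do under eq_bigr => b _ do
  [rewrite (sum_antipoder hH' (F := fun z => \sum_(w <- rho z) G (w.1 * b.1, w.2 * b.2)));
     last by linb].
setoid_rewrite (sum_rho1 hH hH'); try sideb; rewrite /=.
under eq_bigr => q _ do rewrite -scaler_sumr.
rewrite (sum_counitl hH' (G := fun q => \sum_(b <- D' q.2) G (1 * b.1, 1 * b.2))) //;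
  last by linb.
by rewrite -[RHS]big_pair; apply: eq_bigr => ? _; rewrite !mul1r.
Qed.

Lemma sum_cMl (G : A * A -> U) x x' y : lin2 (fun a b => G (a, b)) ->
  \sum_(w <- c (x * x') y) G w =
  \sum_(v <- rho x) \sum_(v' <- c x' y) G (v.1 * v'.1, v.2 * v'.2).
Proof.
by move=> hG; rewrite -{1}[y]mul1r (sum_cM hH hH') // (sum_cx1 hH hH') //; linb.
Qed.

Lemma sum_c_rho_cop' (F : A -> A -> A -> U) g : lin3 F ->
  \sum_(q <- D' g) \sum_(w <- rho q.2) \sum_(z <- c q.1 w.1) F z.1 z.2 w.2 =
  \sum_(w <- rho g) \sum_(q <- D' w.2) F w.1 q.1 q.2.
Proof.
move=> hF.
rewrite -(sum_cop_rho (G := fun q => \sum_(w <- rho q.2) \sum_(z <- c q.1 w.1)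
   F z.1 z.2 w.2)) /=; last by linb.
setoid_rewrite sum_cMl; try sideb; rewrite /=.
setoid_rewrite sum_rho_coassoc; try sideb; rewrite /=.
under eq_bigr => r _ do under eq_bigr => v _ do rewrite exchange_big.
setoid_rewrite sum_c_cop'; try sideb; rewrite /=.
under [RHS]eq_bigr => w _ do [rewrite -(sum_cop_rho (G := fun q => F w.1 q.1 q.2)); last by linb].
setoid_rewrite sum_rho_cop; try sideb; rewrite /=.
setoid_rewrite sum_rho_coassoc; try sideb; rewrite /=.
by under eq_bigr => r _ do rewrite exchange_big.
Qed.

End BraceCoaction.

Section MultiplicativeTrilinear.
Variables (k : fieldType) (A : comAlgType k).
Variables (D : A -> seq (A * A)) (e : A -> k) (S : A -> A).
Hypothesis hH : is_hopf D e S.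

Lemma sum_antipode_mid (U : lmodType k) (G : A -> A -> A -> U) y : lin3 G ->
  \sum_(p <- D y) \sum_(q <- D p.2) G (S p.1 * q.1) q.2 1 = G 1 y 1.
Proof.
move=> hG; rewrite (sum_coassl hH); try side; rewrite /=.
under eq_bigr => p _ do [rewrite (sum_antipodel hH (F := fun w => G w p.2 1)); last by lin].
by rewrite (sum_counitl hH (G := fun p => G 1 p.2 1)) //; lin.
Qed.

Lemma sum_antipode_last (U : lmodType k) (G : A -> A -> A -> U) z : lin3 G ->
  \sum_(p <- D z) \sum_(q <- D (S p.1)) \sum_(a <- D p.2) \sum_(b <- D a.2)
     G (q.1 * a.1) (q.2 * b.1) b.2 = G 1 1 z.
Proof.
move=> hG; setoid_rewrite (sum_coassl hH); try side; rewrite /=.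
under eq_bigr => p _ do rewrite exchange_big.
under eq_bigr => p _ do under eq_bigr => a _ do
  [rewrite -(sum_copM hH (G := fun r => G r.1 r.2 a.2)); last by lin].
rewrite (sum_coassl hH); try side; rewrite /=.
under eq_bigr => p _ do
  [rewrite (sum_antipodel hH (F := fun w => \sum_(r <- D w) G r.1 r.2 p.2)); last by lin].
setoid_rewrite (sum_cop1 hH); try side; rewrite /=.
by rewrite (sum_counitl hH (G := fun p => G 1 1 p.2)) //; lin.
Qed.

(* [L x y z] represents the image of [x (x) y (x) z] under a linear
   endomorphism of [A (x) A (x) A] that is multiplicative. *)
Record mult_trilinear (L : A -> A -> A -> seq (A * A * A)) : Prop := {
  mult_trilinear_lin : forall (U : lmodType k) (f : A -> A -> A -> U), lin3 f ->
    lin3 (fun x y z => \sum_(w <- L x y z) f w.1.1 w.1.2 w.2);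
  mult_trilinear_mul : forall (U : lmodType k) (f : A -> A -> A -> U), lin3 f ->
    forall x x' y y' z z',
    \sum_(w <- L (x * x') (y * y') (z * z')) f w.1.1 w.1.2 w.2 =
    \sum_(w <- L x y z) \sum_(w' <- L x' y' z')
       f (w.1.1 * w'.1.1) (w.1.2 * w'.1.2) (w.2 * w'.2) }.

Definition tri_comp (L M : A -> A -> A -> seq (A * A * A)) x y z : seq (A * A * A) :=
  bind (L x y z) (fun w => M w.1.1 w.1.2 w.2).

Lemma mult_trilinear_comp L M :
  mult_trilinear L -> mult_trilinear M -> mult_trilinear (tri_comp L M).
Proof.
move=> hL hM; have big_comp (U : lmodType k) (f : A -> A -> A -> U) x y z :
    \sum_(w <- tri_comp L M x y z) f w.1.1 w.1.2 w.2 =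
    \sum_(u <- L x y z) \sum_(w <- M u.1.1 u.1.2 u.2) f w.1.1 w.1.2 w.2.
  exact: big_bind.
split=> U f hf.
  have [h1 h2 h3] := mult_trilinear_lin hL (mult_trilinear_lin hM hf).
  by split=> ? ? ? ? ?; rewrite !big_comp; [apply: h1 | apply: h2 | apply: h3].
move=> x x' y y' z z'; rewrite big_comp (mult_trilinear_mul hL (mult_trilinear_lin hM hf)).
setoid_rewrite (mult_trilinear_mul hM hf).
rewrite /tri_comp big_bind; setoid_rewrite (@big_bind U).
by under [RHS]eq_bigr => u _ do rewrite exchange_big.
Qed.

Section Generators.
Variable L : A -> A -> A -> seq (A * A * A).
Hypothesis hL : mult_trilinear L.
Variables (U : lmodType k) (f : A -> A -> A -> U).
Hypothesis hf : lin3 f.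

Lemma mult_trilinear_split x y z :
  \sum_(w <- L x y z) f w.1.1 w.1.2 w.2 =
  \sum_(w <- L x 1 1) \sum_(w' <- L 1 y 1) \sum_(w'' <- L 1 1 z)
     f (w.1.1 * w'.1.1 * w''.1.1) (w.1.2 * w'.1.2 * w''.1.2) (w.2 * w'.2 * w''.2).
Proof.
have -> : L x y z = L ((x * 1) * 1) ((1 * y) * 1) ((1 * 1) * z) by rewrite !mulr1 !mul1r.
rewrite (mult_trilinear_mul hL hf).
rewrite (mult_trilinear_mul hL (f := fun a b c => \sum_(w' <- L 1 1 z)
  f (a * w'.1.1) (b * w'.1.2) (c * w'.2))); last by lin.
by do 3 (apply: eq_bigr => ? _).
Qed.

Lemma mult_trilinear_mid y :
  \sum_(w <- L 1 y 1) f w.1.1 w.1.2 w.2 =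
  \sum_(p <- D y) \sum_(q <- D p.2) \sum_(w <- L (S p.1) 1 1) \sum_(w' <- L q.1 q.2 1)
     f (w.1.1 * w'.1.1) (w.1.2 * w'.1.2) (w.2 * w'.2).
Proof.
rewrite -(sum_antipode_mid (G := fun a b c => \sum_(w <- L a b c) f w.1.1 w.1.2 w.2));
  last exact: mult_trilinear_lin.
apply: eq_bigr => p _; apply: eq_bigr => q _.
by rewrite -(mult_trilinear_mul hL hf) !mul1r.
Qed.

Lemma mult_trilinear_last z :
  \sum_(w <- L 1 1 z) f w.1.1 w.1.2 w.2 =
  \sum_(p <- D z) \sum_(q <- D (S p.1)) \sum_(w <- L q.1 q.2 1)
    \sum_(a <- D p.2) \sum_(b <- D a.2) \sum_(w' <- L a.1 b.1 b.2)
     f (w.1.1 * w'.1.1) (w.1.2 * w'.1.2) (w.2 * w'.2).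
Proof.
rewrite -(sum_antipode_last (G := fun a b c => \sum_(w <- L a b c) f w.1.1 w.1.2 w.2));
  last exact: mult_trilinear_lin.
apply: eq_bigr => p _; apply: eq_bigr => q _.
rewrite exchange_big; apply: eq_bigr => a _; rewrite exchange_big; apply: eq_bigr => b _.
by rewrite -(mult_trilinear_mul hL hf) mul1r.
Qed.

End Generators.

Section Extensionality.
Variables L1 L2 : A -> A -> A -> seq (A * A * A).
Hypothesis hL1 : mult_trilinear L1.
Hypothesis hL2 : mult_trilinear L2.
Hypothesis eq_x11 : forall (U : lmodType k) (f : A -> A -> A -> U), lin3 f -> forall x,
  \sum_(w <- L1 x 1 1) f w.1.1 w.1.2 w.2 = \sum_(w <- L2 x 1 1) f w.1.1 w.1.2 w.2.
Hypothesis eq_cop : forall (U : lmodType k) (f : A -> A -> A -> U), lin3 f -> forall g,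
  \sum_(q <- D g) \sum_(w <- L1 q.1 q.2 1) f w.1.1 w.1.2 w.2 =
  \sum_(q <- D g) \sum_(w <- L2 q.1 q.2 1) f w.1.1 w.1.2 w.2.
Hypothesis eq_cop3 : forall (U : lmodType k) (f : A -> A -> A -> U), lin3 f -> forall h,
  \sum_(p <- D h) \sum_(q <- D p.2) \sum_(w <- L1 p.1 q.1 q.2) f w.1.1 w.1.2 w.2 =
  \sum_(p <- D h) \sum_(q <- D p.2) \sum_(w <- L2 p.1 q.1 q.2) f w.1.1 w.1.2 w.2.

Lemma mult_trilinear_eq_mid (U : lmodType k) (f : A -> A -> A -> U) y : lin3 f ->
  \sum_(w <- L1 1 y 1) f w.1.1 w.1.2 w.2 = \sum_(w <- L2 1 y 1) f w.1.1 w.1.2 w.2.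
Proof.
move=> hf; rewrite (mult_trilinear_mid hL1 hf) (mult_trilinear_mid hL2 hf).
under eq_bigr => p _ do under eq_bigr => q _ do
  [rewrite (eq_x11 (f := fun a b c => \sum_(w' <- L1 q.1 q.2 1)
       f (a * w'.1.1) (b * w'.1.2) (c * w'.2))); last by lin].
under eq_bigr => p _ do rewrite exchange_big.
under [RHS]eq_bigr => p _ do rewrite exchange_big.
apply: eq_bigr => p _; apply: eq_bigr => w _.
by rewrite (eq_cop (f := fun a b c => f (w.1.1 * a) (w.1.2 * b) (w.2 * c))); last by lin.
Qed.

Lemma mult_trilinear_eq_last (U : lmodType k) (f : A -> A -> A -> U) z : lin3 f ->
  \sum_(w <- L1 1 1 z) f w.1.1 w.1.2 w.2 = \sum_(w <- L2 1 1 z) f w.1.1 w.1.2 w.2.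
Proof.
move=> hf; rewrite (mult_trilinear_last hL1 hf) (mult_trilinear_last hL2 hf).
under eq_bigr => p _ do under eq_bigr => q _ do under eq_bigr => w _ do
  [rewrite (eq_cop3 (f := fun a b c => f (w.1.1 * a) (w.1.2 * b) (w.2 * c))); last by lin].
apply: eq_bigr => p _.
by rewrite (eq_cop (f := fun a' b' c' => \sum_(a <- D p.2) \sum_(b <- D a.2)
  \sum_(w' <- L2 a.1 b.1 b.2) f (a' * w'.1.1) (b' * w'.1.2) (c' * w'.2))); last by lin.
Qed.

Lemma mult_trilinear_eq (U : lmodType k) (f : A -> A -> A -> U) x y z : lin3 f ->
  \sum_(w <- L1 x y z) f w.1.1 w.1.2 w.2 = \sum_(w <- L2 x y z) f w.1.1 w.1.2 w.2.
Proof.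
move=> hf; rewrite (mult_trilinear_split hL1 hf) (mult_trilinear_split hL2 hf).
under eq_bigr => w _ do under eq_bigr => w' _ do
  [rewrite (mult_trilinear_eq_last (f := fun a b c =>
     f (w.1.1 * w'.1.1 * a) (w.1.2 * w'.1.2 * b) (w.2 * w'.2 * c))); last by lin].
under eq_bigr => w _ do
  [rewrite (mult_trilinear_eq_mid (f := fun a b c => \sum_(w'' <- L2 1 1 z)
     f (w.1.1 * a * w''.1.1) (w.1.2 * b * w''.1.2) (w.2 * c * w''.2))); last by lin].
by rewrite (eq_x11 (f := fun a b c => \sum_(w' <- L2 1 y 1) \sum_(w'' <- L2 1 1 z)
  f (a * w'.1.1 * w''.1.1) (b * w'.1.2 * w''.1.2) (c * w'.2 * w''.2))); last by lin.
Qed.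

End Extensionality.
End MultiplicativeTrilinear.

Lemma bind_bind (X Y Z : Type) (s : seq X) (F : X -> seq Y) (G : Y -> seq Z) :
  bind (bind s F) G = bind s (fun x => bind (F x) G).
Proof.
by elim: s => //= x s IHs; rewrite /bind /= map_cat flatten_cat; congr (_ ++ _); apply: IHs.
Qed.

Section BraidEquation.
Variables (k : fieldType) (A : comAlgType k).
Variables (D : A -> seq (A * A)) (e : A -> k) (S : A -> A).
Variables (D' : A -> seq (A * A)) (e' : A -> k) (T : A -> A).
Hypothesis hH : is_hopf D e S.
Hypothesis hH' : is_hopf D' e' T.

Local Notation rho := (hb_rho D S D').
Local Notation c := (hb_c D S D' T).

Definition c12_at (x y z : A) : seq (A * A * A) := [seq (v.1, v.2, z) | v <- c x y].
Definition c23_at (x y z : A) : seq (A * A * A) := [seq (x, v.1, v.2) | v <- c y z].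

Definition braid_lhs := tri_comp c12_at (tri_comp c23_at c12_at).
Definition braid_rhs := tri_comp c23_at (tri_comp c12_at c23_at).

Lemma c12_c23_c12 t :
  c12 D S D' T (c23 D S D' T (c12 D S D' T t)) = bind t (fun u => braid_lhs u.1.1 u.1.2 u.2).
Proof. by rewrite /c12 /c23 !bind_bind. Qed.

Lemma c23_c12_c23 t :
  c23 D S D' T (c12 D S D' T (c23 D S D' T t)) = bind t (fun u => braid_rhs u.1.1 u.1.2 u.2).
Proof. by rewrite /c12 /c23 !bind_bind. Qed.

Section Sums.
Variable U : lmodType k.

Lemma big_c12_at (G : A * A * A -> U) x y z :
  \sum_(w <- c12_at x y z) G w = \sum_(v <- c x y) G (v.1, v.2, z).
Proof. exact: big_map. Qed.

Lemma big_c23_at (G : A * A * A -> U) x y z :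
  \sum_(w <- c23_at x y z) G w = \sum_(v <- c y z) G (x, v.1, v.2).
Proof. exact: big_map. Qed.

Lemma big_braid_lhs (G : A * A * A -> U) x y z :
  \sum_(w <- braid_lhs x y z) G w =
  \sum_(v <- c x y) \sum_(w <- c v.2 z) \sum_(u <- c v.1 w.1) G (u.1, u.2, w.2).
Proof.
rewrite /braid_lhs /tri_comp big_bind big_c12_at; apply: eq_bigr => v _.
by rewrite big_bind big_c23_at; apply: eq_bigr => w _; rewrite big_c12_at.
Qed.

Lemma big_braid_rhs (G : A * A * A -> U) x y z :
  \sum_(w <- braid_rhs x y z) G w =
  \sum_(v <- c y z) \sum_(w <- c x v.1) \sum_(u <- c w.2 v.2) G (w.1, u.1, u.2).
Proof.
rewrite /braid_rhs /tri_comp big_bind big_c23_at; apply: eq_bigr => v _.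
by rewrite big_bind big_c12_at; apply: eq_bigr => w _; rewrite big_c23_at.
Qed.

End Sums.

Lemma mult_trilinear_c12 : mult_trilinear c12_at.
Proof.
split=> U f hf.
  have [h1 h2 h3] : lin3 (fun x y z => \sum_(v <- c x y) f v.1 v.2 z) by linb.
  by split=> ? ? ? ? ?; rewrite !big_c12_at; [apply: h1 | apply: h2 | apply: h3].
move=> x x' y y' z z'; rewrite !big_c12_at (sum_cM hH hH'); last by linb.
by apply: eq_bigr => v _; rewrite big_c12_at.
Qed.

Lemma mult_trilinear_c23 : mult_trilinear c23_at.
Proof.
split=> U f hf.
  have [h1 h2 h3] : lin3 (fun x y z => \sum_(v <- c y z) f x v.1 v.2) by linb.
  by split=> ? ? ? ? ?; rewrite !big_c23_at; [apply: h1 | apply: h2 | apply: h3].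
move=> x x' y y' z z'; rewrite !big_c23_at (sum_cM hH hH'); last by linb.
by apply: eq_bigr => v _; rewrite big_c23_at.
Qed.

Lemma mult_trilinear_braid_lhs : mult_trilinear braid_lhs.
Proof.
exact: mult_trilinear_comp mult_trilinear_c12
  (mult_trilinear_comp mult_trilinear_c23 mult_trilinear_c12).
Qed.

Lemma mult_trilinear_braid_rhs : mult_trilinear braid_rhs.
Proof.
exact: mult_trilinear_comp mult_trilinear_c23
  (mult_trilinear_comp mult_trilinear_c12 mult_trilinear_c23).
Qed.

Lemma braid_cop'3 (U : lmodType k) (f : A -> A -> A -> U) h : lin3 f ->
  \sum_(p <- D' h) \sum_(q <- D' p.2) \sum_(w <- braid_lhs p.1 q.1 q.2) f w.1.1 w.1.2 w.2 =
  \sum_(p <- D' h) \sum_(q <- D' p.2) \sum_(w <- braid_rhs p.1 q.1 q.2) f w.1.1 w.1.2 w.2.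
Proof.
move=> hf; setoid_rewrite big_braid_lhs; setoid_rewrite big_braid_rhs; rewrite /=.
rewrite [LHS](sum_coassl hH'); try sideb; rewrite /=.
setoid_rewrite (sum_c_cop' hH hH'); try sideb; rewrite /=.
rewrite [LHS](sum_coassr hH'); try sideb; rewrite /=.
rewrite [RHS](sum_coassl hH'); try sideb; rewrite /=.
setoid_rewrite (sum_c_cop' hH hH'); try sideb; rewrite /=.
rewrite [LHS](sum_coassl hH'); try sideb; rewrite /=.
rewrite [RHS](sum_coassr hH'); try sideb; rewrite /=.
setoid_rewrite (sum_c_cop' hH hH'); try sideb; rewrite /=.
by rewrite [RHS](sum_coassl hH'); try sideb.
Qed.

Hypothesis hB : brace_compatible D S D'.

Lemma braid_x11 (U : lmodType k) (f : A -> A -> A -> U) x : lin3 f ->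
  \sum_(w <- braid_lhs x 1 1) f w.1.1 w.1.2 w.2 = \sum_(w <- braid_rhs x 1 1) f w.1.1 w.1.2 w.2.
Proof.
move=> hf; rewrite big_braid_lhs big_braid_rhs.
rewrite (sum_cx1 hH hH'); try sideb.
setoid_rewrite (sum_cx1 hH hH'); try sideb.
rewrite (sum_rho_coassoc hH hH' hB); try sideb; rewrite /=.
setoid_rewrite (sum_c_cop' hH hH'); try sideb; rewrite /=.
rewrite [RHS](sum_rho1 hH hH'); try sideb; rewrite /=.
rewrite [RHS](sum_cx1 hH hH'); try sideb.
setoid_rewrite (sum_cx1 hH hH'); try sideb.
by rewrite [RHS](sum_rho_coassoc hH hH' hB); try sideb.
Qed.

Lemma braid_cop' (U : lmodType k) (f : A -> A -> A -> U) g : lin3 f ->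
  \sum_(q <- D' g) \sum_(w <- braid_lhs q.1 q.2 1) f w.1.1 w.1.2 w.2 =
  \sum_(q <- D' g) \sum_(w <- braid_rhs q.1 q.2 1) f w.1.1 w.1.2 w.2.
Proof.
move=> hf; setoid_rewrite big_braid_lhs; setoid_rewrite big_braid_rhs; rewrite /=.
rewrite [LHS](sum_c_cop' hH hH'); try sideb; rewrite /=.
setoid_rewrite (sum_cx1 hH hH'); try sideb; rewrite /=.
rewrite [LHS](sum_c_rho_cop' hH hH' hB); try sideb.
rewrite [RHS](sum_c_rho_cop' hH hH' hB (F := fun x y z => \sum_(u <- c y z) f x u.1 u.2));
  try sideb; rewrite /=.
by setoid_rewrite (sum_c_cop' hH hH'); try sideb.
Qed.

End BraidEquation.

Theorem proposition2p9 (k : fieldType) (A : comAlgType k)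
    (D : A -> seq (A * A)) (e : A -> k) (S : A -> A)
    (D' : A -> seq (A * A)) (e' : A -> k) (T : A -> A) :
  hopf_brace D e S D' e' T ->
  forall t : seq (A * A * A),
    teq3 (c12 D S D' T (c23 D S D' T (c12 D S D' T t)))
         (c23 D S D' T (c12 D S D' T (c23 D S D' T t))).
Proof.
case=> hH hH' hB t U f hf.
rewrite c12_c23_c12 c23_c12_c23 !big_bind; apply: eq_bigr => u _.
apply: (mult_trilinear_eq hH' (mult_trilinear_braid_lhs hH hH')
  (mult_trilinear_braid_rhs hH hH')) => // V g hg x.
- exact: (braid_x11 hH hH' hB).
- exact: (braid_cop' hH hH' hB).
- exact: (braid_cop'3 hH hH').
Qed.
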